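(* Let $R$ be an integral domain and $\mathfrak p$ a prime ideal of $R$ such that $\widehat{R}_{\mathfrak p}$ is an integral domain containing $R$ (via the canonical map). Let $f\in R[[X]]$ be $\widehat{\mathfrak p}$-distinguished in $\widehat{R}_{\mathfrak p}[[X]]$. Suppose that $\widehat{R}_{\mathfrak p}/f_0\widehat{R}_{\mathfrak p}\cong R/f_0R$ as $R$-algebras and that every divisor of $f_0$ in $\widehat{R}_{\mathfrak p}$ is associate in $\widehat{R}_{\mathfrak p}$ to a divisor of $f_0$ in $R$. Then $f$ is irreducible in $R[[X]]$ if and only if the Weierstrass polynomial $P_f$ associated to $f$ in $\widehat{R}_{\mathfrak p}[X]$ is irreducible in $\widehat{R}_{\mathfrak p}[X]$. More precisely: (1) if $f=gh$ with nonunits $g,h\in R[[X]]$, then $g$ and $h$ are $\widehat{\mathfrak p}$-distinguished in $\widehat{R}_{\mathfrak p}[[X]]$, $P_f=P_gP_h$, and $P_g,P_h$ are nonunits in $\widehat{R}_{\mathfrak p}[X]$; (2) if $P_f=GH$ with nonunits $G,H\in\widehat{R}_{\mathfrak p}[X]$, then $f=gh$ for some nonunits $g,h\in R[[X]]$ with $G=uP_g$ and $H=u^{-1}P_h$ for a unique unit $u\in\widehat{R}_{\mathfrak p}$.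
   Context: $\widehat{R}_{\mathfrak p}=\varprojlim R/\mathfrak p^n$ is the $\mathfrak p$-adic completion and $\widehat{\mathfrak p}$ the closure of the image of $\mathfrak p$ in it; $\widehat{R}_{\mathfrak p}$ is complete with respect to the filtration by closures of powers of $\mathfrak p$. A series $g\in S[[X]]$ is $\mathfrak b$-distinguished of order $n$ if its coefficients $g_i$ lie in $\mathfrak b$ for $i<n$ and $g_n$ is a unit mod $\mathfrak b$; for a $\widehat{\mathfrak p}$-distinguished $g$, $P_g$ is the unique monic polynomial in $\widehat{R}_{\mathfrak p}[X]$ with non-leading coefficients in $\widehat{\mathfrak p}$ such that $g=UP_g$ for some unit $U\in\widehat{R}_{\mathfrak p}[[X]]$. $f_0$ is the constant term of $f$. *)

From HB Require Import structures.
From mathcomp Require Import all_boot all_order all_algebra.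
From Stdlib Require Import ClassicalEpsilon.
Set Implicit Arguments. Unset Strict Implicit. Unset Printing Implicit Defensive.
Import Order.TTheory GRing.Theory Num.Theory.
Local Open Scope ring_scope.

Definition is_ideal (R : comRingType) (I : R -> Prop) : Prop :=
  I 0 /\ (forall x y, I x -> I y -> I (x + y)) /\ (forall x, I x -> I (- x)) /\
  (forall a x, I x -> I (a * x)).

Definition prime_ideal (R : comRingType) (I : R -> Prop) : Prop :=
  is_ideal I /\ ~ I 1 /\ (forall a b, I (a * b) -> I a \/ I b).

Fixpoint ideal_pow (R : comRingType) (I : R -> Prop) (n : nat) : R -> Prop :=
  match n with
  | 0%N => fun _ => True
  | m.+1 => fun x => exists s : seq (R * R),
      x = \sum_(ab <- s) (ab.1 * ab.2) /\
      (forall ab, ab \in s -> ideal_pow I m ab.1 /\ I ab.2)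
  end.

(* (S, iota, J) is the p-adic completion  lim R/p^n  of R: J n is the kernel of
   the projection S -> R/p^n.  These conditions say exactly that the induced map
   S -> lim R/p^n is a ring isomorphism compatible with the canonical maps. *)
Definition is_padic_completion (R S : comRingType) (iota : {rmorphism R -> S})
    (p : R -> Prop) (J : nat -> S -> Prop) : Prop :=
  (forall n, is_ideal (J n)) /\
  (forall n s, J n.+1 s -> J n s) /\
  (forall n r, J n (iota r) <-> ideal_pow p n r) /\
  (forall n s, exists r, J n (s - iota r)) /\
  (forall s, (forall n, J n s) -> s = 0) /\
  (forall r : nat -> R, (forall n, ideal_pow p n (r n.+1 - r n)) ->
     exists s, forall n, J n (s - iota (r n))).

(* closure of iota(p) in the topology defined by the filtration J *)
Definition phat (R S : comRingType) (iota : {rmorphism R -> S})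
    (p : R -> Prop) (J : nat -> S -> Prop) : S -> Prop :=
  fun s => forall n, exists r, p r /\ J n (s - iota r).

Definition pser (R : Type) := nat -> R.

Definition ps_mul (R : comRingType) (f g : pser R) : pser R :=
  fun n => \sum_(i < n.+1) f i * g (n - i)%N.

Definition ps_one (R : comRingType) : pser R := fun n => (n == 0%N)%:R.

Definition ps_unit (R : comRingType) (f : pser R) : Prop :=
  exists g, ps_mul f g = ps_one R.

Definition ps_irreducible (R : comRingType) (f : pser R) : Prop :=
  f <> (fun _ => 0) /\ ~ ps_unit f /\
  (forall g h, f = ps_mul g h -> ps_unit g \/ ps_unit h).

Definition ps_map (R S : comRingType) (iota : R -> S) (f : pser R) : pser S :=
  fun n => iota (f n).

Definition ps_of_poly (S : comRingType) (P : {poly S}) : pser S := fun n => P`_n.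

Definition poly_irreducible (S : idomainType) (P : {poly S}) : Prop :=
  P != 0 /\ P \isn't a GRing.unit /\
  (forall G H, P = G * H -> G \is a GRing.unit \/ H \is a GRing.unit).

Definition distinguished (S : comRingType) (b : S -> Prop) (g : pser S) : Prop :=
  exists n, (forall i, (i < n)%N -> b (g i)) /\ exists y, b (g n * y - 1).

Definition is_wpoly (S : comRingType) (b : S -> Prop) (g : pser S) (P : {poly S}) : Prop :=
  P \is monic /\ (forall i, (i < (size P).-1)%N -> b P`_i) /\
  exists U, ps_unit U /\ g = ps_mul U (ps_of_poly P).

Definition WP (S : comRingType) (b : S -> Prop) (g : pser S) : {poly S} :=
  epsilon (inhabits 0) (is_wpoly b g).

(* Since [phat] is prime, the position of the first coefficient of a series outside [phat] is
   additive under products.  Hence every factor of the [phat]-distinguished series [f] is again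
   distinguished and, by uniqueness of the Weierstrass preparation, [P_(g h) = P_g P_h]; a factor
   whose constant term becomes a unit over [Rhat] was a unit over [R], because that constant term
   divides [f0].  Conversely, a factorisation [P_f = G H] is first normalised to monic
   distinguished factors and then descended to [R[[X]]]: the divisor hypothesis makes the
   constant term of [G] associate to a divisor of [f0] in [R], the isomorphism
   [R/f0 = Rhat/f0] writes every series over [Rhat] as [r + f c] with [r] over [R], and it also
   makes divisibility by [f] descend from [Rhat[[X]]] to [R[[X]]]. *)

From HB Require Import structures.
From mathcomp Require Import all_boot all_order all_algebra.
From mathcomp Require Import boolp.
From mathcomp Require Import zify ring.
From Stdlib Require Import ClassicalEpsilon.
Import GRing.Theory.
Set Implicit Arguments. Unset Strict Implicit. Unset Printing Implicit Defensive.
Local Open Scope ring_scope.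

Section Ideals.
Variable R : comNzRingType.
Implicit Type I : R -> Prop.

Lemma ideal0 I : is_ideal I -> I 0. Proof. by case. Qed.
Lemma idealD I x y : is_ideal I -> I x -> I y -> I (x + y).
Proof. by case=> _ [] H _; apply: H. Qed.
Lemma idealN I x : is_ideal I -> I x -> I (- x).
Proof. by case=> _ [] _ [] H _; apply: H. Qed.
Lemma idealB I x y : is_ideal I -> I x -> I y -> I (x - y).
Proof. by move=> I_ideal hx hy; apply: idealD (idealN I_ideal hy). Qed.
Lemma idealMl I {a} x : is_ideal I -> I x -> I (a * x).
Proof. by case=> _ [] _ [] _ H; apply: H. Qed.
Lemma idealMr I {a} x : is_ideal I -> I x -> I (x * a).
Proof. by rewrite mulrC; apply: idealMl. Qed.

Lemma ideal_subK I x y : is_ideal I -> I (x - y) -> I y -> I x.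
Proof. by move=> I_ideal hxy hy; have := idealD I_ideal hxy hy; rewrite subrK. Qed.

Lemma ideal_subKr I x y : is_ideal I -> I x -> I (x - y) -> I y.
Proof. by move=> I_ideal hx hxy; have := idealB I_ideal hx hxy; rewrite opprB addrC subrK. Qed.

Lemma ideal_sum I (T : Type) (r : seq T) (P : pred T) (F : T -> R) :
  is_ideal I -> (forall i, P i -> I (F i)) -> I (\sum_(i <- r | P i) F i).
Proof.
by move=> I_ideal HF; apply: (big_ind I) => //; [exact: ideal0 | move=> x y; exact: idealD].
Qed.

End Ideals.

Fixpoint seq_rec (T : Type) (step : nat -> seq T -> T) (k : nat) : seq T :=
  if k is k'.+1 then rcons (seq_rec step k') (step k' (seq_rec step k')) else [::].

Lemma nth_seq_rec T (x0 : T) step k j :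
  (j < k)%N -> nth x0 (seq_rec step k) j = step j (seq_rec step j).
Proof.
have size_rec m : size (seq_rec step m) = m by elim: m => //= m IH; rewrite size_rcons IH.
elim: k => // k IH; rewrite ltnS leq_eqVlt => /orP[/eqP ->|lt_jk] /=.
  by rewrite nth_rcons size_rec ltnn eqxx.
by rewrite nth_rcons size_rec lt_jk IH.
Qed.

Lemma is_ideal_eq0 (R : comNzRingType) : is_ideal (fun x : R => x = 0).
Proof.
do !split; first by move=> x y -> ->; rewrite addr0.
  by move=> x ->; rewrite oppr0.
by move=> a x ->; rewrite mulr0.
Qed.

(** * Formal power series *)

Section PowerSeriesRing.
Variable R : comNzRingType.
Implicit Types f g h : pser R.

HB.instance Definition _ := Choice.on (pser R).

Definition ps_add f g : pser R := fun n => f n + g n.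
Definition ps_opp f : pser R := fun n => - f n.

Lemma ps_addA : associative ps_add.
Proof. by move=> f g h; apply/funext=> n; rewrite /ps_add addrA. Qed.
Lemma ps_addC : commutative ps_add.
Proof. by move=> f g; apply/funext=> n; rewrite /ps_add addrC. Qed.
Lemma ps_add0 : left_id (fun _ => 0) ps_add.
Proof. by move=> f; apply/funext=> n; rewrite /ps_add add0r. Qed.
Lemma ps_addN : left_inverse (fun _ => 0) ps_opp ps_add.
Proof. by move=> f; apply/funext=> n; rewrite /ps_add /ps_opp addNr. Qed.
HB.instance Definition _ := GRing.isZmodule.Build (pser R) ps_addA ps_addC ps_add0 ps_addN.

Definition ps_trunc f n : {poly R} := \poly_(j < n.+1) f j.

Lemma ps_mul_trunc f g n i : (i <= n)%N -> ps_mul f g i = (ps_trunc f n * ps_trunc g n)`_i.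
Proof.
move=> le_in; rewrite coefM /ps_mul; apply: eq_bigr => j _.
rewrite /ps_trunc !coef_poly !ltnS (leq_trans (leq_ord j) le_in).
by rewrite (leq_trans (leq_subr _ _) le_in).
Qed.

Lemma ps_mulA : associative (@ps_mul R).
Proof.
move=> f g h; apply/funext=> n.
transitivity ((ps_trunc f n * (ps_trunc g n * ps_trunc h n))`_n).
  rewrite coefM /ps_mul; apply: eq_bigr => j _.
  rewrite -(@ps_mul_trunc _ _ n _ (leq_subr j n)) /ps_trunc coef_poly.
  by rewrite (leq_ltn_trans (leq_ord j) (ltnSn n)).
rewrite mulrA coefM /ps_mul; apply: eq_bigr => j _.
rewrite -(@ps_mul_trunc _ _ n _ (ltnSE (ltn_ord j))) /ps_trunc coef_poly.
by rewrite ltnS leq_subr.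
Qed.

Lemma ps_mulC : commutative (@ps_mul R).
Proof. by move=> f g; apply/funext=> n; rewrite !(ps_mul_trunc _ _ (leqnn n)) mulrC. Qed.

Lemma ps_mul1 : left_id (ps_one R) (@ps_mul R).
Proof.
move=> f; apply/funext=> n; rewrite (ps_mul_trunc _ _ (leqnn n)).
have -> : ps_trunc (ps_one R) n = 1.
  apply/polyP=> i; rewrite /ps_trunc coef_poly coef1 /ps_one.
  by case: ifP => // /negbT; rewrite -leqNgt; case: i.
by rewrite mul1r /ps_trunc coef_poly ltnSn.
Qed.

Lemma ps_mulDl : left_distributive (@ps_mul R) ps_add.
Proof.
move=> f g h; apply/funext=> n; rewrite /ps_mul /ps_add -big_split /=.
by apply: eq_bigr => i _; rewrite mulrDl.
Qed.

Lemma ps_one_neq0 : ps_one R != 0.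
Proof. by apply/eqP => /(congr1 (fun f : pser R => f 0%N))/eqP; rewrite oner_eq0. Qed.

HB.instance Definition _ := GRing.Zmodule_isComNzRing.Build (pser R)
  ps_mulA ps_mulC ps_mul1 ps_mulDl ps_one_neq0.

Lemma pscoefD f g n : (f + g) n = f n + g n. Proof. by []. Qed.
Lemma pscoefN f n : (- f) n = - f n. Proof. by []. Qed.
Lemma pscoefB f g n : (f - g) n = f n - g n. Proof. by []. Qed.
Lemma pscoef0 n : (0 : pser R) n = 0. Proof. by []. Qed.
Lemma pscoef1 n : (1 : pser R) n = (n == 0%N)%:R. Proof. by []. Qed.
Lemma pscoefM f g n : (f * g) n = \sum_(i < n.+1) f i * g (n - i)%N. Proof. by []. Qed.
Lemma pscoefM0 f g : (f * g) 0%N = f 0%N * g 0%N. Proof. by rewrite pscoefM big_ord1. Qed.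

Lemma pscoef_sum (T : Type) (r : seq T) (P : pred T) (F : T -> pser R) i :
  (\sum_(k <- r | P k) F k) i = \sum_(k <- r | P k) F k i.
Proof. exact: (big_morph (fun f : pser R => f i)). Qed.

Lemma pscoefM_eq f g g' n : (forall i, (i <= n)%N -> g i = g' i) ->
  (f * g) n = (f * g') n.
Proof. by move=> eq_g; apply: eq_bigr => i _; rewrite eq_g ?leq_subr. Qed.

Section IdealCoefficients.
Variable I : R -> Prop.

Lemma pscoefM_ideal_lt f g a b : is_ideal I ->
  (forall j, (j < a)%N -> I (f j)) -> (forall j, (j < b)%N -> I (g j)) ->
  forall i, (i < a + b)%N -> I ((f * g) i).
Proof.
move=> I_ideal If Ig i lt_i; rewrite pscoefM; apply: (ideal_sum _ I_ideal) => j _.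
case: (ltnP j a) => hj; first exact: idealMr I_ideal (If _ hj).
by apply: idealMl I_ideal (Ig _ _); have := ltn_ord j; lia.
Qed.

Lemma pscoefM_ideal_term f g n l : is_ideal I -> (l <= n)%N ->
  (forall j, (j <= n)%N -> j <> l -> I (f j * g (n - j)%N)) ->
  I ((f * g) n - f l * g (n - l)%N).
Proof.
move=> I_ideal le_ln H; rewrite pscoefM (bigD1 (Ordinal (leq_ltn_trans le_ln (ltnSn n)))) //=.
rewrite addrC addrK; apply: (ideal_sum _ I_ideal) => j ne_jl.
by apply: H => [|e]; [exact: ltnSE (ltn_ord j) | rewrite -val_eqE /= e eqxx in ne_jl].
Qed.

Lemma pscoefM_ideal_addn f g a b : is_ideal I ->
  (forall j, (j < a)%N -> I (f j)) -> (forall j, (j < b)%N -> I (g j)) ->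
  I ((f * g) (a + b)%N - f a * g b).
Proof.
move=> I_ideal If Ig; have := @pscoefM_ideal_term f g (a + b) a I_ideal (leq_addr _ _).
rewrite addKn; apply=> j le_j ne_ja; case: (ltngtP j a) => [lt|gt|//].
  exact: idealMr I_ideal (If _ lt).
by apply: idealMl I_ideal (Ig _ _); lia.
Qed.

End IdealCoefficients.

Definition psC (c : R) : pser R := fun n => if n == 0%N then c else 0.

Lemma pscoefCM c f n : (psC c * f) n = c * f n.
Proof.
rewrite pscoefM big_ord_recl subn0 big1 ?addr0 // => i _.
by rewrite /psC /= mul0r.
Qed.

Definition psXn (n : nat) : pser R := fun i => (i == n)%:R.

Lemma pscoefMXn g n m : (g * psXn n) m = if (m < n)%N then 0 else g (m - n)%N.
Proof.
rewrite pscoefM; case: ltnP => lt_mn.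
  apply: big1 => i _; rewrite /psXn (_ : (m - i == n)%N = false) ?mulr0 //.
  by apply/eqP; lia.
rewrite (bigD1 (Ordinal (leq_ltn_trans (leq_subr n m) (ltnSn m)))) //= /psXn.
rewrite subKn // eqxx mulr1 big1 ?addr0 // => i ne_i.
rewrite (_ : (m - i == n)%N = false) ?mulr0 //; apply/eqP.
by move: ne_i; rewrite -val_eqE /=; have := ltn_ord i; lia.
Qed.

Lemma pscoefX_lt (w : pser R) : w 0%N = 0 -> forall k i, (i < k)%N -> (w ^+ k) i = 0.
Proof.
move=> w0; elim=> [|k IH] i // lt_ik; rewrite exprS.
have low_w j : (j < 1)%N -> w j = 0 by case: j.
exact: (pscoefM_ideal_lt (is_ideal_eq0 R) low_w IH).
Qed.

End PowerSeriesRing.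
Arguments psXn {R} n.

Section PowerSeriesUnits.
Variable R : comUnitRingType.

Lemma ps_unitP (f : pser R) : ps_unit f <-> f 0%N \is a GRing.unit.
Proof.
split=> [[g fg1]|unit_f0].
  by apply/unitrPr; exists (g 0%N); rewrite -pscoefM0; exact: (congr1 (fun h => h 0%N) fg1).
pose c := (f 0%N)^-1; pose w := 1 - psC c * f.
have w0 : w 0%N = 0 by rewrite /w pscoefB pscoefCM mulVr // subrr.
(* the n-th coefficient of the inverse is read off the geometric sum of order n *)
pose geom N := psC c * \sum_(k < N.+1) w ^+ k.
exists (fun n => geom n n); apply/funext => n.
change ((f * (fun m => geom m m)) n = (1 : pser R) n).
have geom_stable N : (n <= N)%N -> (f * (fun m => geom m m)) n = (f * geom N) n.
  move=> le_nN; apply: pscoefM_eq => i le_in; rewrite /geom !pscoefCM !pscoef_sum.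
  rewrite -!(big_mkord xpredT (fun k => (w ^+ k) i)); congr (_ * _).
  rewrite [RHS](big_cat_nat (leq0n i.+1)) ?ltnS ?(leq_trans le_in) //=.
  rewrite [X in _ = _ + X]big1_seq ?addr0 //.
  by move=> k; rewrite mem_index_iota => /andP[_ /andP[lt_ik _]]; apply: pscoefX_lt.
have fc : f * psC c = 1 - w by rewrite /w opprB addrC subrK mulrC.
rewrite (geom_stable n) // /geom mulrA fc -opprB mulNr -subrX1 opprB.
by rewrite pscoefB pscoefX_lt ?subr0.
Qed.

End PowerSeriesUnits.

Section PowerSeriesDomain.
Variable R : idomainType.

Lemma ps_mul_eq0 (a b : pser R) : a * b = 0 -> a = 0 \/ b = 0.
Proof.
move=> ab0; case: (pselect (a = 0)) => [|a_neq0]; [by left | right].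
apply: contrapT => b_neq0.
have nz_coef (c : pser R) : c <> 0 -> exists i, c i != 0.
  move=> c_neq0; apply: contrapT => H; apply: c_neq0; apply/funext => i.
  by apply/eqP; apply: contrapT => /negP ci; apply: H; exists i.
case: (ex_minnP (nz_coef a a_neq0)) => i ai Hi.
case: (ex_minnP (nz_coef b b_neq0)) => j bj Hj.
have low (c : pser R) k : (forall l, c l != 0 -> (k <= l)%N) -> forall l, (l < k)%N -> c l = 0.
  by move=> compl l lt_lk; apply/eqP; apply: contraTT lt_lk => /compl; rewrite -leqNgt.
have := pscoefM_ideal_addn (is_ideal_eq0 R) (low a i Hi) (low b j Hj).
by rewrite ab0 pscoef0 sub0r => /eqP; rewrite oppr_eq0 mulf_eq0 (negbTE ai) (negbTE bj).
Qed.

Lemma ps_mulfI (g : pser R) : g != 0 -> injective ( *%R g).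
Proof.
move=> g_neq0 x y /= gxy; have : g * (x - y) = 0 by rewrite mulrBr gxy subrr.
by case/ps_mul_eq0 => [g0|/eqP]; [rewrite g0 eqxx in g_neq0 | rewrite subr_eq0 => /eqP].
Qed.

End PowerSeriesDomain.

Section PowerSeriesMap.
Variables (R S : comNzRingType) (iota : {rmorphism R -> S}).

Lemma ps_mapM (f g : pser R) : ps_map iota (f * g) = ps_map iota f * ps_map iota g.
Proof.
apply/funext=> n; rewrite /ps_map !pscoefM rmorph_sum.
by apply: eq_bigr => i _; rewrite rmorphM.
Qed.

Lemma ps_map1 : ps_map iota 1 = 1.
Proof. by apply/funext=> n; rewrite /ps_map !pscoef1 rmorph_nat. Qed.

Lemma ps_map_inj : injective iota -> injective (ps_map iota).
Proof. by move=> iota_inj f g /(congr1 (fun h => h _)) fg; apply/funext=> n; apply/iota_inj/fg. Qed.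

Lemma ps_unit_map (g : pser R) : ps_unit g -> ps_unit (ps_map iota g).
Proof.
case=> g' gg'; exists (ps_map iota g'); rewrite -[ps_mul _ _]ps_mapM.
by rewrite -[ps_one S]ps_map1; congr ps_map.
Qed.

End PowerSeriesMap.

Section PolynomialSeries.
Variable S : comNzRingType.

Lemma ps_of_polyM (P Q : {poly S}) : ps_of_poly (P * Q) = ps_of_poly P * ps_of_poly Q.
Proof. by apply/funext=> n; rewrite /ps_of_poly coefM. Qed.

Lemma ps_of_poly_monic_neq0 (G : {poly S}) : G \is monic -> ps_of_poly G != 0.
Proof.
move=> mG; apply/eqP => /(congr1 (fun X : pser S => X (size G).-1)).
by rewrite /ps_of_poly -lead_coefE (monicP mG) pscoef0 => /eqP; rewrite oner_eq0.
Qed.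

End PolynomialSeries.

(** * The completion and its filtration *)

Section Completion.
Variables (R : comNzRingType) (S : comUnitRingType) (iota : {rmorphism R -> S}).
Variables (p : R -> Prop) (J : nat -> S -> Prop).
Hypotheses (prime_p : prime_ideal p) (compl : is_padic_completion iota p J).

Lemma J_ideal n : is_ideal (J n). Proof. by case: compl. Qed.
Lemma J_S n s : J n.+1 s -> J n s. Proof. by case: compl => _ [] H _; apply: H. Qed.
Lemma J_iota n r : J n (iota r) <-> ideal_pow p n r. Proof. by case: compl => _ [] _ [] H _. Qed.
Lemma J_approx n s : exists r, J n (s - iota r). Proof. by case: compl => _ [] _ [] _ [] H _. Qed.
Lemma J_sep s : (forall n, J n s) -> s = 0.
Proof. by case: compl => _ [] _ [] _ [] _ [] H _; apply: H. Qed.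
Lemma J_cauchy (r : nat -> R) : (forall n, ideal_pow p n (r n.+1 - r n)) ->
  exists s, forall n, J n (s - iota (r n)).
Proof. by case: compl => _ [] _ [] _ [] _ [] _ H; apply: H. Qed.

Lemma J_le m n s : (m <= n)%N -> J n s -> J m s.
Proof.
elim: n => [|n IH]; first by rewrite leqn0 => /eqP ->.
by rewrite leq_eqVlt => /orP[/eqP -> //|/IH Jm /J_S].
Qed.

Lemma J0 s : J 0 s.
Proof. by have [r Jr] := J_approx 0 s; apply: ideal_subK (J_ideal 0) Jr _; apply/J_iota. Qed.

Lemma ideal_pow1 r : ideal_pow p 1 r <-> p r.
Proof.
have Ip : is_ideal p by case: prime_p.
split=> [[s [-> ps]]|pr]; last first.
  by exists [:: (1, r)]; rewrite big_seq1 mul1r; split=> // ab; rewrite inE => /eqP ->.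
rewrite big_seq; apply: (ideal_sum _ Ip) => ab /ps [_]; exact: idealMl.
Qed.

Lemma J1_iota r : J 1 (iota r) <-> p r.
Proof. by rewrite -ideal_pow1; apply: J_iota. Qed.

Lemma J_mul1 k a b : J k a -> J 1 b -> J k.+1 (a * b).
Proof.
move=> Ja Jb; have [r Jr] := J_approx k.+1 a; have [r' Jr'] := J_approx k.+1 b.
have pk_r : ideal_pow p k r by apply/J_iota; apply: ideal_subKr (J_ideal k) Ja (J_S Jr).
have p_r' : p r'.
  by apply/J1_iota; apply: ideal_subKr (J_ideal 1) Jb (J_le (ltn0Sn k) Jr').
have Jrr' : J k.+1 (iota (r * r')).
  by apply/J_iota; exists [:: (r, r')]; rewrite big_seq1; split=> // ab; rewrite inE => /eqP ->.
have -> : a * b = a * (b - iota r') + (a - iota r) * iota r' + iota (r * r').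
  by rewrite rmorphM; ring.
by apply: idealD (J_ideal _) _ Jrr'; apply: idealD (J_ideal _) _ _;
  [exact: idealMl (J_ideal _) Jr' | exact: idealMr (J_ideal _) Jr].
Qed.

Lemma J1_prime a b : J 1 (a * b) -> J 1 a \/ J 1 b.
Proof.
move=> Jab; have [r Jr] := J_approx 1 a; have [r' Jr'] := J_approx 1 b.
have /J1_iota : J 1 (iota (r * r')).
  have -> : iota (r * r') = a * b - (a * (b - iota r') + (a - iota r) * iota r').
    by rewrite rmorphM; ring.
  by apply: idealB (J_ideal _) Jab _; apply: idealD (J_ideal _) _ _;
    [exact: idealMl (J_ideal _) Jr' | exact: idealMr (J_ideal _) Jr].
case: prime_p => _ [_ p_prime] /p_prime [] /J1_iota Jiota; [left|right].
  exact: ideal_subK (J_ideal 1) Jr Jiota.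
exact: ideal_subK (J_ideal 1) Jr' Jiota.
Qed.

Lemma J1_neq1 : ~ J 1 1.
Proof. by rewrite -(rmorph1 iota) => /J1_iota; case: prime_p => _ []. Qed.

Lemma J_lim (s : nat -> S) : (forall k, J k (s k.+1 - s k)) ->
  exists L, forall k, J k (L - s k).
Proof.
move=> Js; have [r Jr] := boolp.choice (fun k => J_approx k (s k)).
have [L JL] : exists L, forall n, J n (L - iota (r n)).
  apply: J_cauchy => n; apply/J_iota.
  have -> : iota (r n.+1 - r n) = (s n.+1 - s n) - (s n.+1 - iota (r n.+1)) + (s n - iota (r n)).
    by rewrite rmorphB; ring.
  by apply: idealD (J_ideal _) _ (Jr n); apply: idealB (J_ideal _) (Js n) (J_S (Jr n.+1)).
exists L => k; have -> : L - s k = (L - iota (r k)) - (s k - iota (r k)) by ring.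
exact: idealB (J_ideal _) (JL k) (Jr k).
Qed.

Lemma J_expn x : J 1 x -> forall k, J k (x ^+ k).
Proof. by move=> Jx; elim=> [|k IH]; [exact: J0 | rewrite exprSr; apply: J_mul1]. Qed.

(* [1 - x] is inverted by the limit of the geometric series *)
Lemma J1_unit_subr x : J 1 x -> (1 - x) \is a GRing.unit.
Proof.
move=> Jx; pose s k := \sum_(i < k) x ^+ i.
have [L JL] : exists L, forall k, J k (L - s k).
  by apply: J_lim => k; rewrite /s big_ord_recr /= addrC addrK; apply: J_expn.
apply/unitrPr; exists L; apply/eqP; rewrite -subr_eq0; apply/eqP; apply: J_sep => k.
have geom : (1 - x) * s k = 1 - x ^+ k by rewrite -opprB mulNr /s -subrX1 opprB.
have -> : (1 - x) * L - 1 = (1 - x) * (L - s k) - x ^+ k by rewrite mulrBr geom; ring.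
exact: idealB (J_ideal _) (idealMl (J_ideal _) (JL k)) (J_expn Jx k).
Qed.

Lemma J1_unit a y : J 1 (a * y - 1) -> a \is a GRing.unit.
Proof.
move=> Jay; suff : (a * y) \is a GRing.unit by rewrite unitrM => /andP[].
have -> : a * y = 1 - (1 - a * y) by rewrite opprB addrC subrK.
by apply: J1_unit_subr; rewrite -opprB; apply: idealN (J_ideal 1) Jay.
Qed.

Lemma unit_notin_J1 a : a \is a GRing.unit -> ~ J 1 a.
Proof. by move=> ua Ja; apply: J1_neq1; rewrite -(mulrV ua); apply: idealMr (J_ideal _) Ja. Qed.

Lemma phat_J1 : phat iota p J = J 1.
Proof.
apply/funext=> s; apply/propext; split.
  by case/(_ 1%N) => r [pr Jr]; apply: ideal_subK (J_ideal 1) Jr _; apply/J1_iota.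
move=> Js [|n]; first by exists 0; split; [case: prime_p => -[] | exact: J0].
have [r Jr] := J_approx n.+1 s; exists r; split=> //; apply/J1_iota.
exact: ideal_subKr (J_ideal 1) Js (J_le (ltn0Sn n) Jr).
Qed.

(** * Weierstrass preparation *)

Definition red_order (F : pser S) n := (forall i, (i < n)%N -> J 1 (F i)) /\ ~ J 1 (F n).

Lemma red_order_mul F G a b : red_order F a -> red_order G b -> red_order (F * G) (a + b).
Proof.
move=> [lowF nF] [lowG nG]; split; first exact: pscoefM_ideal_lt (J_ideal 1) lowF lowG.
move=> JFG; have JFaGb := pscoefM_ideal_addn (J_ideal 1) lowF lowG.
by case/J1_prime: (ideal_subKr (J_ideal 1) JFG JFaGb).
Qed.

Lemma red_order_uniq F a b : red_order F a -> red_order F b -> a = b.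
Proof. by move=> [la na] [lb nb]; case: (ltngtP a b) => // [/lb|/la]. Qed.

Lemma red_order_exists F : (exists i, ~ J 1 (F i)) -> exists n, red_order F n.
Proof.
move=> [i nJi]; have ex_i : exists i, ~~ `[< J 1 (F i) >] by exists i; apply/asboolP.
case: (ex_minnP ex_i) => m /asboolP nJm min_m; exists m; split=> // j lt_jm.
by apply: contrapT => /(introN (asboolP _))/min_m; rewrite leqNgt lt_jm.
Qed.

Lemma red_order_unit U : ps_unit U -> red_order U 0.
Proof. by move/ps_unitP/unit_notin_J1. Qed.

Definition distinguished_poly (P : {poly S}) :=
  P \is monic /\ forall i, (i < (size P).-1)%N -> J 1 P`_i.

Lemma red_order_dpoly P : distinguished_poly P -> red_order (ps_of_poly P) (size P).-1.
Proof.
by case=> mP lowP; split=> //; rewrite /ps_of_poly -lead_coefE (monicP mP); exact: J1_neq1.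
Qed.

Lemma wpoly_red_order F P : is_wpoly (J 1) F P -> red_order F (size P).-1.
Proof.
case=> mP [lowP [U [uU ->]]].
exact: red_order_mul (red_order_unit uU) (red_order_dpoly (conj mP lowP)).
Qed.

Lemma distinguished_red_order F : distinguished (J 1) F ->
  exists n, red_order F n /\ F n \is a GRing.unit.
Proof.
by case=> n [low [y Jy]]; have uFn := J1_unit Jy; exists n; do !split=> //; apply: unit_notin_J1.
Qed.

Definition psJ k (D : pser S) := forall i, J k (D i).

Lemma psJ_mull k X D : psJ k D -> psJ k (X * D).
Proof.
by move=> JD i; apply: (ideal_sum _ (J_ideal k)) => j _; apply: idealMl (J_ideal _) (JD _).
Qed.

Lemma psJ_mul1 k A D : psJ 1 A -> psJ k D -> psJ k.+1 (A * D).
Proof.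
by move=> JA JD i; apply: (ideal_sum _ (J_ideal _)) => j _; rewrite mulrC; apply: J_mul1.
Qed.

Lemma psJ_sep D : (forall k, psJ k D) -> D = 0.
Proof. by move=> JD; apply/funext=> i; apply: J_sep => k; apply: JD. Qed.

Section DistinguishedPolyMultiples.
Variables (P : {poly S}) (Q : pser S).
Hypothesis dP : distinguished_poly P.
Hypothesis QP_high0 : forall i, ((size P).-1 <= i)%N -> (Q * ps_of_poly P) i = 0.

(* modulo [J (k+1)], the coefficient of [Q P] of degree [i + deg P] is [Q i] *)
Lemma psJ_dpoly_multiple k : psJ k Q -> psJ k.+1 Q.
Proof.
move=> JQ i; case: dP => mP lowP; set d := (size P).-1.
have lcP : (ps_of_poly P) d = 1 by rewrite /ps_of_poly -lead_coefE; exact: monicP.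
have := @pscoefM_ideal_term _ _ Q (ps_of_poly P) (i + d) i (J_ideal k.+1) (leq_addr _ _).
rewrite QP_high0 ?leq_addl // addKn lcP sub0r mulr1 => JQi.
rewrite -[Q i]opprK; apply: idealN (J_ideal _) _; apply: JQi.
move=> j le_jd ne_ji; case: (ltngtP j i) => [lt_ji|lt_ij|//].
  rewrite /ps_of_poly nth_default ?mulr0; first exact: ideal0 (J_ideal _).
  by rewrite /d; case: (size P) => [|s] //=; lia.
by rewrite /ps_of_poly; apply: J_mul1; [exact: JQ | apply: lowP; rewrite /d; lia].
Qed.

Lemma dpoly_multiple_eq0 : Q = 0.
Proof. by apply: psJ_sep; elim=> [|k IH]; [move=> i; exact: J0 | exact: psJ_dpoly_multiple]. Qed.

End DistinguishedPolyMultiples.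

Lemma wpoly_unique F P1 P2 : is_wpoly (J 1) F P1 -> is_wpoly (J 1) F P2 -> P1 = P2.
Proof.
move=> w1 w2; have deg_eq := red_order_uniq (wpoly_red_order w1) (wpoly_red_order w2).
case: w1 => m1 [_ [U1 [[V1 UV1] eF1]]]; case: w2 => m2 [l2 [U2 [_ eF2]]].
have {}UV1 : V1 * U1 = 1 by rewrite mulrC; exact: UV1.
have high_eq i : ((size P2).-1 <= i)%N -> P1`_i = P2`_i.
  have s1 := size_poly_gt0 P1; have s2 := size_poly_gt0 P2.
  rewrite !monic_neq0 // in s1 s2; rewrite leq_eqVlt => /orP[/eqP <-|lt].
    by rewrite -[in LHS]deg_eq -!lead_coefE (monicP m1) (monicP m2).
  rewrite !nth_default //; first by rewrite -(prednK s2).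
  by rewrite -(prednK s1) deg_eq.
have eQ : (V1 * U2 - 1) * ps_of_poly P2 = ps_of_poly P1 - ps_of_poly P2.
  rewrite mulrBl mul1r -mulrA; congr (_ - _).
  by rewrite -[U2 * _]eF2 [F]eF1 mulrA UV1 mul1r.
have Q0 := @dpoly_multiple_eq0 P2 (V1 * U2 - 1) (conj m2 l2).
apply/polyP => i; apply/eqP; rewrite -subr_eq0; apply/eqP.
rewrite -[_ - _]/((ps_of_poly P1 - ps_of_poly P2) i) -eQ Q0 ?mul0r //.
by move=> j /high_eq; rewrite eQ pscoefB /ps_of_poly => ->; rewrite subrr.
Qed.

Definition pshift n (h : pser S) : pser S := fun i => h (i + n)%N.

Lemma ps_contraction_fixpoint n (C A : pser S) : psJ 1 A ->
  exists Q, Q = C * (1 - pshift n (A * Q)).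
Proof.
move=> JA; pose T X := C * (1 - pshift n (A * X)).
have T_contr k X Y : psJ k (X - Y) -> psJ k.+1 (T X - T Y).
  move=> JXY; have -> : T X - T Y = - (C * pshift n (A * (X - Y))).
    rewrite /T -mulrBr -mulrN; congr (C * _); apply/funext => i.
    by rewrite /pshift mulrBr !(pscoefB, pscoefN); ring.
  by move=> i; apply: idealN (J_ideal _) _; apply: psJ_mull => j; apply: psJ_mul1.
pose Qs k := iter k T 0.
have JQs k : psJ k (Qs k.+1 - Qs k).
  by elim: k => [|k IH] i; [exact: J0 | exact: T_contr].
have [Q JQ] : exists Q : pser S, forall i k, J k (Q i - Qs k i).
  have [Q HQ] := boolp.choice (fun i => @J_lim (fun k => Qs k i) (fun k => JQs k i)).
  by exists Q.
exists Q; apply/eqP; rewrite -subr_eq0; apply/eqP; apply: psJ_sep => k i.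
have -> : (Q - T Q) i = (Q i - Qs k.+1 i) - (T Q - T (Qs k)) i.
  by rewrite !pscoefB [Qs k.+1]iterS; ring.
apply: idealB (J_ideal _) _ _; first exact: J_S (JQ i k.+1).
exact: J_S (T_contr k Q (Qs k) (fun j => JQ j k) i).
Qed.

(* write [F = A + B X^n] with [A] the part below the order [n] and [B] a unit; the fixed point
   [Q] of [Q = B^-1 (1 - (A Q div X^n))] makes [F Q = (A Q mod X^n) + X^n] *)
Lemma wpoly_exists F : distinguished (J 1) F -> exists P, is_wpoly (J 1) F P.
Proof.
case=> n [low [y Jy]].
pose A : pser S := fun i => if (i < n)%N then F i else 0.
have FA : F = A + pshift n F * psXn n.
  apply/funext=> m; rewrite pscoefD pscoefMXn /A /pshift.
  by case: ltnP => [_|le_nm]; rewrite ?addr0 ?add0r ?subnK.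
have JA : psJ 1 A by move=> i; rewrite /A; case: ltnP => [/low //|_]; exact: ideal0 (J_ideal _).
have [C BC] : ps_unit (pshift n F) by apply/ps_unitP; rewrite /pshift add0n; exact: J1_unit Jy.
have {}BC : pshift n F * C = 1 := BC.
have [Q eQ] := ps_contraction_fixpoint n C JA.
have FQ : F * Q = A * Q + (1 - pshift n (A * Q)) * psXn n.
  by rewrite {1}FA mulrDl; congr (_ + _); rewrite mulrAC {1}eQ mulrA BC mul1r.
have JAQ : psJ 1 (A * Q) by rewrite mulrC; apply: psJ_mull.
have FQ_low m : (m < n)%N -> J 1 ((F * Q) m).
  by move=> lt_mn; rewrite FQ pscoefD pscoefMXn lt_mn addr0; apply: JAQ.
have FQ_high m : (n <= m)%N -> (F * Q) m = (m == n)%:R.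
  move=> le_nm; rewrite FQ pscoefD pscoefMXn ltnNge le_nm /= pscoefB pscoef1 /pshift subnK //.
  by rewrite subn_eq0 eqn_leq le_nm andbT addrC subrK.
pose P := \poly_(i < n.+1) (F * Q) i.
have sP : size P = n.+1 by rewrite size_poly_eq // FQ_high // eqxx oner_eq0.
have eP : ps_of_poly P = F * Q.
  apply/funext=> i; rewrite /ps_of_poly coef_poly; case: ltnP => // lt_ni.
  by rewrite FQ_high ?(ltnW lt_ni) // gtn_eqF.
have [Q' QQ'] : ps_unit Q.
  apply/ps_unitP; rewrite eQ pscoefM0 unitrM; apply/andP; split.
    by apply/ps_unitP; exists (pshift n F); change (C * pshift n F = 1); rewrite mulrC.
  by rewrite pscoefB pscoef1 /pshift add0n; apply: J1_unit_subr; exact: JAQ.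
have {}QQ' : Q * Q' = 1 := QQ'.
exists P; split; first by rewrite monicE lead_coefE sP coef_poly ltnSn FQ_high // eqxx.
split; first by move=> i; rewrite sP coef_poly => lt_in; rewrite ltnS ltnW //; exact: FQ_low.
exists Q'; split; first by exists Q; change (Q' * Q = 1); rewrite mulrC.
by change (F = Q' * ps_of_poly P); rewrite eP mulrCA [Q' * Q]mulrC QQ' mulr1.
Qed.

Lemma WP_spec F : distinguished (J 1) F -> is_wpoly (J 1) F (WP (J 1) F).
Proof. by move/wpoly_exists => exP; apply: epsilon_spec. Qed.

Lemma WP_eq F P : is_wpoly (J 1) F P -> WP (J 1) F = P.
Proof. by move=> w; apply: (wpoly_unique _ w); apply: epsilon_spec; exists P. Qed.

Lemma WP_mul (A B : pser S) : distinguished (J 1) A -> distinguished (J 1) B ->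
  WP (J 1) (A * B) = WP (J 1) A * WP (J 1) B.
Proof.
move=> /WP_spec[mA [lowA [UA [[VA UVA] eA]]]] /WP_spec[mB [lowB [UB [[VB UVB] eB]]]].
have {}eA : A = UA * ps_of_poly (WP (J 1) A) := eA.
have {}eB : B = UB * ps_of_poly (WP (J 1) B) := eB.
apply: WP_eq; split; first by rewrite monicMl.
have sA := size_poly_gt0 (WP (J 1) A); have sB := size_poly_gt0 (WP (J 1) B).
rewrite !monic_neq0 // in sA sB; split.
  move=> i; rewrite size_monicM ?monic_neq0 // => lt_i.
  rewrite -/(ps_of_poly _ i) ps_of_polyM; apply: pscoefM_ideal_lt (J_ideal 1) lowA lowB _ _.
  by rewrite -(prednK sA) -(prednK sB) addSn addnS /= in lt_i.
exists (UA * UB); split.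
  exists (VA * VB); change (UA * UB * (VA * VB) = 1).
  by rewrite mulrACA; change (ps_mul UA VA * ps_mul UB VB = 1); rewrite UVA UVB mulr1.
change (A * B = UA * UB * ps_of_poly (WP (J 1) A * WP (J 1) B)).
by rewrite ps_of_polyM {1}eA {1}eB; ring.
Qed.

Lemma red_order_dvdl F G H n : red_order F n -> F = G * H -> exists i, red_order G i.
Proof.
move=> [_ nJFn] eF; apply: red_order_exists; apply: contrapT => allJG; apply: nJFn.
have JG : psJ 1 G by move=> i; apply: contrapT => nJGi; apply: allJG; exists i.
by rewrite eF mulrC; apply: psJ_mull.
Qed.

(* the orders of the reductions of [G] and [H] add up to that of [F], and the leading reduced
   coefficient of [F], a unit, is the product of theirs modulo [J 1] *)
Lemma distinguished_dvdl F G H : distinguished (J 1) F -> F = G * H -> distinguished (J 1) G.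
Proof.
move=> /distinguished_red_order[n [oF uFn]] eF.
have [i oG] := red_order_dvdl oF eF; have [j oH] := red_order_dvdl oF (etrans eF (mulrC G H)).
have eij := red_order_uniq oF (eq_ind_r (red_order^~ _) (red_order_mul oG oH) eF).
exists i; split; first by case: oG.
exists (H j * (F n)^-1).
have JFn : J 1 (F n - G i * H j).
  by rewrite eij eF; apply: pscoefM_ideal_addn (J_ideal 1) oG.1 oH.1.
have -> : G i * (H j * (F n)^-1) - 1 = - ((F n - G i * H j) * (F n)^-1).
  by rewrite mulrBl mulrV // mulrA opprB.
by apply: idealN (J_ideal _) _; apply: idealMr (J_ideal _) JFn.
Qed.
End Completion.

(** * Descent from the completion *)

Section CompletionDomain.
Variables (R S : idomainType) (iota : {rmorphism R -> S}).
Variables (p : R -> Prop) (J : nat -> S -> Prop).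
Hypotheses (prime_p : prime_ideal p) (compl : is_padic_completion iota p J).

Lemma WP_unitP F : distinguished (J 1) F -> WP (J 1) F \is a GRing.unit <-> ps_unit F.
Proof.
move=> dF; have w := WP_spec prime_p compl dF; have oW := wpoly_red_order prime_p compl w.
have [n [oF uFn]] := distinguished_red_order prime_p compl dF.
rewrite (red_order_uniq oF oW) in uFn.
split=> [|uF]; first by rewrite poly_unitE => /andP[/eqP sW _]; apply/ps_unitP; rewrite sW in uFn.
have deg0 := red_order_uniq (red_order_unit prime_p compl uF) oW.
case: w => mW _; have sW : size (WP (J 1) F) = 1%N.
  by move: deg0 (monic_neq0 mW); rewrite -size_poly_gt0; case: size => [|[|m]].
by have := monicP mW; rewrite lead_coefE poly_unitE sW eqxx /= => ->; exact: unitr1.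
Qed.

Lemma dpoly_scale (c : S) (Q : {poly S}) : c * lead_coef Q = 1 ->
  (forall i, (i < (size Q).-1)%N -> J 1 Q`_i) -> distinguished_poly J (c *: Q).
Proof.
move=> cQ lowQ; have c_neq0 : c != 0.
  by apply: contra_eq_neq cQ => ->; rewrite mul0r eq_sym oner_eq0.
split=> [|i]; first by rewrite monicE lead_coefZ cQ.
change ((i < (size (c *: Q)).-1)%N -> J 1 (c *: Q)`_i).
by rewrite size_scale // coefZ => /lowQ; apply: idealMl (J_ideal compl 1).
Qed.

(* the orders of the reductions of [G] and [H] are at most their degrees and add up to the
   degree of [P], hence equal them *)
Lemma dpoly_factor (P G H : {poly S}) : distinguished_poly J P -> P = G * H ->
  [/\ lead_coef G * lead_coef H = 1, distinguished_poly J ((lead_coef G)^-1 *: G)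
    & distinguished_poly J (lead_coef G *: H)].
Proof.
move=> [mP lowP] eP; have P_neq0 := monic_neq0 mP.
have [G_neq0 H_neq0] : G != 0 /\ H != 0.
  by split; apply: contra_neq P_neq0 => Q0; rewrite eP Q0 (mul0r, mulr0).
have lcGH : lead_coef G * lead_coef H = 1 by rewrite -lead_coefM -eP (monicP mP).
have ulcG : lead_coef G \is a GRing.unit by apply/unitrPr; exists (lead_coef H).
have ulcH : lead_coef H \is a GRing.unit by apply/unitrPr; exists (lead_coef G); rewrite mulrC.
have order_le (Q : {poly S}) : lead_coef Q \is a GRing.unit ->
    exists2 i, red_order J (ps_of_poly Q) i & (i <= (size Q).-1)%N.
  move=> /(unit_notin_J1 prime_p compl) nJlc.
  have [i oQ] := red_order_exists (ex_intro _ (size Q).-1 nJlc).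
  by exists i; rewrite // leqNgt; apply/negP => /(oQ.1 _).
have [iG oG leG] := order_le G ulcG; have [iH oH leH] := order_le H ulcH.
have oGH := red_order_mul prime_p compl oG oH; rewrite -ps_of_polyM -eP in oGH.
have sG : (0 < size G)%N by rewrite size_poly_gt0.
have sH : (0 < size H)%N by rewrite size_poly_gt0.
have deg_sum : (iG + iH = (size G).-1 + (size H).-1)%N.
  have := red_order_uniq (red_order_dpoly prime_p compl (conj mP lowP)) oGH.
  by rewrite eP size_mul // -(prednK sG) -(prednK sH) addSn addnS /= => <-.
have [eiG eiH] : iG = (size G).-1 /\ iH = (size H).-1 by split; lia.
split=> //; apply: dpoly_scale; rewrite ?mulVr // => i; rewrite -?eiG -?eiH.
  exact: oG.1.
exact: oH.1.
Qed.

Section Descent.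
Hypothesis iota_inj : injective iota.
Variable f : pser R.
Hypothesis mod_f0_inj : forall r : R, (exists c : S, iota r = iota (f 0%N) * c) ->
  exists c : R, r = f 0%N * c.
Hypothesis mod_f0_surj : forall s : S, exists r : R, exists c : S, s - iota r = iota (f 0%N) * c.
Hypothesis dvd_f0_assoc : forall d : S, (exists c : S, iota (f 0%N) = d * c) ->
  exists e : R, (exists c : R, f 0%N = e * c) /\ exists v : S, v \is a GRing.unit /\ d = v * iota e.

Lemma iota_surj_f0_eq0 : f 0%N = 0 -> forall s, exists r, s = iota r.
Proof.
move=> f0 s; have [r [c sc]] := mod_f0_surj s; exists r.
by apply/eqP; rewrite -subr_eq0 sc f0 rmorph0 mul0r.
Qed.

(* coefficientwise, [R/f0 -> S/f0] being onto lets one solve [s_k = r_k + (f c)_k] for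
   [r_k, c_k] once [c_0, ..., c_(k-1)] are known *)
Lemma ps_decomp (s : pser S) r0 c0 : s 0%N = iota r0 + iota (f 0%N) * c0 ->
  exists (r : pser R) (c : pser S),
    [/\ r 0%N = r0, c 0%N = c0 & s = ps_map iota r + ps_map iota f * c].
Proof.
move=> s0; have /boolp.choice[phi Hphi] : forall t, exists rc : R * S,
    t - iota rc.1 = iota (f 0%N) * rc.2.
  by move=> t; have [r [c tc]] := mod_f0_surj t; exists (r, c).
pose step k (cs : seq S) := if k is k'.+1
  then phi (s k - \sum_(i < k) iota (f i.+1) * nth 0 cs (k - i.+1)) else (r0, c0).
pose cs := seq_rec (fun k cs => (step k cs).2).
exists (fun k => (step k (cs k)).1), (fun k => (step k (cs k)).2); split=> //.
apply/funext=> -[|k]; first by rewrite pscoefD pscoefM big_ord1 /= s0.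
pose t := s k.+1 - \sum_(i < k.+1) iota (f i.+1) * nth 0 (cs k.+1) (k.+1 - i.+1).
rewrite pscoefD pscoefM big_ord_recl subn0 /ps_map /=.
rewrite -/t addrA -Hphi.
suff -> : \sum_(i < k.+1) iota (f (bump 0 i)) *
    (step (k.+1 - bump 0 i)%N (cs (k.+1 - bump 0 i)%N)).2 = s k.+1 - t by ring.
rewrite /t opprB addrC subrK; apply: eq_bigr => i _; rewrite /bump leq0n add1n subSS.
by rewrite nth_seq_rec //; have := ltn_ord i; lia.
Qed.

Lemma ps_dvd_descent (c : pser S) (a : pser R) : f 0%N != 0 ->
  ps_map iota f * c = ps_map iota a -> exists d : pser R, c = ps_map iota d.
Proof.
move=> f0_neq0 eca; have if0_neq0 : iota (f 0%N) != 0.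
  by apply: contra_neq f0_neq0; rewrite -(rmorph0 iota); apply: iota_inj.
suff /boolp.choice[d Hd] : forall k, exists d, c k = iota d by exists d; apply/funext.
elim/ltn_ind => k IH; have /boolp.choice[dd Hdd] : forall j, exists d, (j < k)%N -> c j = iota d.
  by move=> j; case: (ltnP j k) => [/IH[d Hd]|_]; [exists d | exists 0].
pose T := \sum_(i < k) f (bump 0 i) * dd (k - bump 0 i)%N.
have ek : iota (a k) = iota (f 0%N) * c k + iota T.
  have := congr1 (fun h => h k) eca; rewrite /= pscoefM big_ord_recl subn0 /ps_map => <-.
  congr (_ + _); rewrite rmorph_sum; apply: eq_bigr => i _; rewrite rmorphM Hdd //.
  by rewrite lift0; have := ltn_ord i; lia.
have [d Hd] : exists d, a k - T = f 0%N * d.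
  by apply: mod_f0_inj; exists (c k); rewrite rmorphB ek addrK.
by exists d; apply: (mulfI if0_neq0); rewrite -rmorphM -Hd rmorphB ek addrK.
Qed.

Lemma unit_descent r : (exists t, f 0%N = r * t) -> iota r \is a GRing.unit -> r \is a GRing.unit.
Proof.
move=> [t ft] u_ir; case: (eqVneq (f 0%N) 0) => [f0|f0_neq0].
  have [r' ir'] := iota_surj_f0_eq0 f0 (iota r)^-1.
  by apply/unitrPr; exists r'; apply: iota_inj; rewrite rmorphM -ir' mulrV // rmorph1.
have [c tc] : exists c, t = f 0%N * c.
  by apply: mod_f0_inj; exists (iota r)^-1; rewrite ft rmorphM mulrAC mulrV // mul1r.
apply/unitrPr; exists c; apply/eqP; rewrite -subr_eq0; apply/eqP.
apply: (mulfI f0_neq0); rewrite mulr0 mulrBr mulr1 {2}ft tc; ring.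
Qed.

Lemma ps_unit_descent g h : f = g * h -> ps_unit (ps_map iota g) -> ps_unit g.
Proof.
move=> fgh /ps_unitP u_ig; apply/ps_unitP; apply: unit_descent u_ig.
by exists (h 0%N); rewrite fgh pscoefM0.
Qed.

(* the divisor hypothesis makes the constant term of [G] associate to a divisor [e] of [f 0] in
   [R]; correcting [G] by the unit [v^-1] and by a multiple of [f] then gives a series over [R] *)
Lemma ps_lift_divisor (G M : pser S) : ps_map iota f = G * M ->
  exists (g : pser R) (W : pser S),
    [/\ ps_unit W, ps_map iota g = W * G & exists c, f 0%N = g 0%N * c].
Proof.
move=> eF; have [e [[c' fe] [v [uv Ge]]]] : exists e : R, (exists c, f 0%N = e * c) /\
    exists v, v \is a GRing.unit /\ G 0%N = v * iota e.
  by apply: dvd_f0_assoc; exists (M 0%N); rewrite -pscoefM0 -eF.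
pose s := G * psC v^-1.
have s0 : s 0%N = iota e + iota (f 0%N) * 0.
  by rewrite /s pscoefM0 Ge /psC /= mulrAC mulrV // mul1r mulr0 addr0.
have [g [cc [g0 cc0 es]]] := ps_decomp s0.
exists g, (psC v^-1 - M * cc); split; last by exists c'; rewrite g0.
  by apply/ps_unitP; rewrite pscoefB pscoefM0 cc0 mulr0 subr0 /psC /= unitrV.
have -> : ps_map iota g = s - ps_map iota f * cc by rewrite es addrK.
by rewrite eF /s; ring.
Qed.

(* the constant term of [K] lies in [R]; write [K = a + f c2] with [a] over [R] and [c2 0 = 0],
   so that [f] divides [g a] over [S], hence over [R], with a cofactor that is a unit *)
Lemma ps_lift_dvd (g : pser R) (K : pser S) : ps_map iota f = ps_map iota g * K ->
  (exists c, f 0%N = g 0%N * c) -> exists h, f = g * h.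
Proof.
move=> eF [c' fc']; case: (eqVneq (f 0%N) 0) => [f0|f0_neq0].
  have /boolp.choice[k Hk] := fun i => iota_surj_f0_eq0 f0 (K i).
  by exists k; apply: (ps_map_inj iota_inj); rewrite ps_mapM eF; congr (_ * _); apply/funext.
have ig0_neq0 : iota (g 0%N) != 0.
  apply: contra_neq f0_neq0 => ig0; apply: iota_inj.
  by rewrite fc' rmorphM ig0 mul0r rmorph0.
have K0 : K 0%N = iota c' + iota (f 0%N) * 0.
  apply: (mulfI ig0_neq0); rewrite mulr0 addr0 -rmorphM -fc'.
  by have := congr1 (fun h => h 0%N) eF; rewrite /= pscoefM0.
have [a [c2 [_ c20 eK]]] := ps_decomp K0.
have e3 : ps_map iota f * (1 - ps_map iota g * c2) = ps_map iota (g * a).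
  by rewrite ps_mapM mulrBr mulr1 {1}eF eK; ring.
have [z ez] := ps_dvd_descent f0_neq0 e3.
have [zi zzi] : ps_unit z.
  apply/ps_unitP; suff -> : z 0%N = 1 by exact: unitr1.
  apply: iota_inj; rewrite rmorph1; have := congr1 (fun h => h 0%N) ez.
  by rewrite /= pscoefB pscoefM0 c20 mulr0 subr0 /ps_map => <-.
have {}zzi : z * zi = 1 := zzi.
have fz : f * z = g * a by apply: (ps_map_inj iota_inj); rewrite !ps_mapM -ez e3 ps_mapM.
by exists (a * zi); rewrite mulrA -fz -mulrA zzi mulr1.
Qed.

Hypothesis dist_f : distinguished (J 1) (ps_map iota f).

Lemma WP_factor_nonunit g h : f = g * h -> ~ ps_unit g ->
  distinguished (J 1) (ps_map iota g) -> WP (J 1) (ps_map iota g) \isn't a GRing.unit.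
Proof. by move=> fgh nug dg; apply/negP => /(WP_unitP dg)/(ps_unit_descent fgh). Qed.

Lemma factor_WP_mul g h : ~ ps_unit g -> ~ ps_unit h -> f = g * h ->
  [/\ distinguished (J 1) (ps_map iota g), distinguished (J 1) (ps_map iota h),
    WP (J 1) (ps_map iota f) = WP (J 1) (ps_map iota g) * WP (J 1) (ps_map iota h),
    WP (J 1) (ps_map iota g) \isn't a GRing.unit & WP (J 1) (ps_map iota h) \isn't a GRing.unit].
Proof.
move=> nug nuh fgh; have eF : ps_map iota f = ps_map iota g * ps_map iota h by rewrite fgh ps_mapM.
have dg := distinguished_dvdl prime_p compl dist_f eF.
have dh := distinguished_dvdl prime_p compl dist_f (etrans eF (mulrC _ _)).
split=> //; first by rewrite eF; exact (WP_mul prime_p compl dg dh).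
  exact: WP_factor_nonunit fgh nug dg.
by apply: WP_factor_nonunit nuh dh; rewrite fgh mulrC.
Qed.

Lemma lift_dpoly_factorization (U : pser S) (G H : {poly S}) :
  ps_unit U -> distinguished_poly J G -> distinguished_poly J H ->
  ps_map iota f = U * ps_of_poly (G * H) ->
  exists g h : pser R, [/\ f = g * h, WP (J 1) (ps_map iota g) = G & WP (J 1) (ps_map iota h) = H].
Proof.
move=> [V UV] [mG lowG] [mH lowH] eF; have {}UV : U * V = 1 := UV.
have [g [W [[Wi WWi] eg g_dvd]]] : exists (g : pser R) (W : pser S),
    [/\ ps_unit W, ps_map iota g = W * ps_of_poly G & exists c, f 0%N = g 0%N * c].
  by apply: ps_lift_divisor; rewrite eF ps_of_polyM mulrCA.
have {}WWi : W * Wi = 1 := WWi.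
have [h fgh] : exists h, f = g * h.
  apply: ps_lift_dvd g_dvd.
  rewrite (_ : ps_map iota f = W * ps_of_poly G * (Wi * U * ps_of_poly H)) ?eg //.
  by rewrite eF ps_of_polyM -[LHS]mul1r -WWi; ring.
have eh : ps_map iota h = Wi * U * ps_of_poly H.
  have /(ps_mulfI (ps_of_poly_monic_neq0 mG)) Wh :
      ps_of_poly G * (W * ps_map iota h) = ps_of_poly G * (U * ps_of_poly H).
    by rewrite mulrA (mulrC _ W) -eg -ps_mapM -fgh eF ps_of_polyM; ring.
  by rewrite -[ps_map iota h]mul1r -WWi (mulrC W) -[LHS]mulrA Wh mulrA.
exists g, h; split=> //; apply: (WP_eq prime_p compl).
  by do !split=> //; exists W; split=> //; exists Wi.
do !split=> //; exists (Wi * U); split=> //; exists (W * V).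
by change (Wi * U * (W * V) = 1); rewrite mulrACA (mulrC Wi) WWi UV mulr1.
Qed.

Lemma WP_factor_lift (G H : {poly S}) : WP (J 1) (ps_map iota f) = G * H ->
  G \isn't a GRing.unit -> H \isn't a GRing.unit ->
  exists g h : pser R, ~ ps_unit g /\ ~ ps_unit h /\ f = ps_mul g h /\
    distinguished (J 1) (ps_map iota g) /\ distinguished (J 1) (ps_map iota h) /\
    exists! u : S, u \is a GRing.unit /\
      G = u *: WP (J 1) (ps_map iota g) /\ H = u^-1 *: WP (J 1) (ps_map iota h).
Proof.
move=> eP nuG nuH; have [mP [lowP [U [uU eF]]]] := WP_spec prime_p compl dist_f.
have {}eF : ps_map iota f = U * ps_of_poly (WP (J 1) (ps_map iota f)) := eF.
have [lcGH dG1 dH1] := dpoly_factor (conj mP lowP) eP; set c := lead_coef G in lcGH dG1 dH1.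
have uc : c \is a GRing.unit by apply/unitrPr; exists (lead_coef H).
have [g [h [fgh wg wh]]] : exists g h : pser R,
    [/\ f = g * h, WP (J 1) (ps_map iota g) = c^-1 *: G & WP (J 1) (ps_map iota h) = c *: H].
  apply: lift_dpoly_factorization uU dG1 dH1 _.
  by rewrite eF eP -scalerAl -scalerAr scalerA mulVr // scale1r.
have eF' : ps_map iota f = ps_map iota g * ps_map iota h by rewrite fgh ps_mapM.
have dg := distinguished_dvdl prime_p compl dist_f eF'.
have dh := distinguished_dvdl prime_p compl dist_f (etrans eF' (mulrC _ _)).
have scale_unit (a : S) (Q : {poly S}) :
    a \is a GRing.unit -> Q \is a GRing.unit -> a *: Q \is a GRing.unit.
  by move=> ua uQ; rewrite -mul_polyC unitrM rmorph_unit.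
exists g, h; do !split=> //.
- move/(ps_unit_map iota)/(WP_unitP dg); rewrite wg => /(scale_unit c _ uc).
  by rewrite scalerA mulrV // scale1r; apply/negP.
- have uci : c^-1 \is a GRing.unit by rewrite unitrV.
  move/(ps_unit_map iota)/(WP_unitP dh); rewrite wh => /(scale_unit _ _ uci).
  by rewrite scalerA mulVr // scale1r; apply/negP.
exists c; split; first by rewrite wg wh !scalerA mulrV ?mulVr // !scale1r.
move=> u [_ [eG _]]; have := congr1 lead_coef eG.
by rewrite lead_coefZ wg (monicP dG1.1) mulr1.
Qed.

Lemma irreducible_WP : ps_irreducible f <-> poly_irreducible (WP (J 1) (ps_map iota f)).
Proof.
have [mP _] := WP_spec prime_p compl dist_f.
have nuP_nuf : WP (J 1) (ps_map iota f) \isn't a GRing.unit <-> ~ ps_unit f.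
  split=> [nuP /(ps_unit_map iota)/(WP_unitP dist_f)|nuf]; first by apply/negP.
  by apply/negP => /(WP_unitP dist_f)/(ps_unit_descent (esym (mulr1 f))).
split=> [[_ [nuf irr_f]]|[_ [nuP irr_P]]].
  split; first exact: monic_neq0.
  split=> [|G H eP]; first exact/nuP_nuf.
  case: (boolP (G \is a GRing.unit)) => [|nuG]; first by left.
  case: (boolP (H \is a GRing.unit)) => [|nuH]; first by right.
  by have [g [h [nug [nuh [fgh _]]]]] := WP_factor_lift eP nuG nuH; case: (irr_f g h fgh).
split.
  move=> f0; have [n [_ [y Jy]]] := dist_f; have := J1_unit prime_p compl Jy.
  by rewrite /ps_map f0 rmorph0 unitr0.
split=> [|g h fgh]; first exact/nuP_nuf.
case: (pselect (ps_unit g)) => [|nug]; first by left.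
case: (pselect (ps_unit h)) => [|nuh]; first by right.
have [_ _ ePgh nuPg nuPh] := factor_WP_mul nug nuh fgh.
by case: (irr_P _ _ ePgh); [move/negP: nuPg | move/negP: nuPh].
Qed.
End Descent.
End CompletionDomain.

Theorem theorem7p1 (R S : idomainType) (iota : {rmorphism R -> S})
    (p : R -> Prop) (J : nat -> S -> Prop) (f : pser R) :
  prime_ideal p ->
  is_padic_completion iota p J ->
  injective iota ->
  distinguished (phat iota p J) (ps_map iota f) ->
  (* R/f0R -> Rhat/f0Rhat (the only possible R-algebra map) is bijective *)
  (forall r : R, (exists c : S, iota r = iota (f 0%N) * c) ->
     exists c : R, r = f 0%N * c) ->
  (forall s : S, exists r : R, exists c : S, s - iota r = iota (f 0%N) * c) ->
  (* divisors of f0 in Rhat are associate to divisors of f0 in R *)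
  (forall d : S, (exists c : S, iota (f 0%N) = d * c) ->
     exists e : R, (exists c : R, f 0%N = e * c) /\
       exists v : S, v \is a GRing.unit /\ d = v * iota e) ->
  (ps_irreducible f <->
     poly_irreducible (WP (phat iota p J) (ps_map iota f)))
  /\
  (forall g h : pser R, ~ ps_unit g -> ~ ps_unit h -> f = ps_mul g h ->
     distinguished (phat iota p J) (ps_map iota g) /\
     distinguished (phat iota p J) (ps_map iota h) /\
     WP (phat iota p J) (ps_map iota f) =
       WP (phat iota p J) (ps_map iota g) * WP (phat iota p J) (ps_map iota h) /\
     WP (phat iota p J) (ps_map iota g) \isn't a GRing.unit /\
     WP (phat iota p J) (ps_map iota h) \isn't a GRing.unit)
  /\
  (forall G H : {poly S}, WP (phat iota p J) (ps_map iota f) = G * H ->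
     G \isn't a GRing.unit -> H \isn't a GRing.unit ->
     exists g h : pser R, ~ ps_unit g /\ ~ ps_unit h /\ f = ps_mul g h /\
       distinguished (phat iota p J) (ps_map iota g) /\
       distinguished (phat iota p J) (ps_map iota h) /\
       exists! u : S, u \is a GRing.unit /\
         G = u *: WP (phat iota p J) (ps_map iota g) /\
         H = u^-1 *: WP (phat iota p J) (ps_map iota h)).
Proof.
move=> prime_p compl iota_inj dist_f mod_f0_inj mod_f0_surj dvd_f0_assoc.
rewrite (phat_J1 prime_p compl) in dist_f *.
split; first exact (irreducible_WP prime_p compl iota_inj mod_f0_inj mod_f0_surj
  dvd_f0_assoc dist_f).
split; last exact (WP_factor_lift prime_p compl iota_inj mod_f0_inj mod_f0_surj
  dvd_f0_assoc dist_f).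
move=> g h nug nuh fgh.
by have [] := factor_WP_mul prime_p compl iota_inj mod_f0_inj mod_f0_surj dist_f nug nuh fgh.
Qed.
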